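(* Let $q>1$, let $\mathbb{X}$ be a Banach space and let $f:\overline{q^{\mathbb{Z}}}\to\mathbb{X}$ be almost automorphic. If there is an integer $n_0$ such that $f(q^n)=0$ for all integers $n>n_0$, then $f(t)=0$ for all $t\in\overline{q^{\mathbb{Z}}}$.
   Context: $\overline{q^{\mathbb{Z}}}=\{q^n:n\in\mathbb{Z}\}\cup\{0\}$ with $q>1$; a function on it is continuous iff $\lim_{n\to-\infty}f(q^n)=f(0)$. Definition: a continuous function $f:\overline{q^{\mathbb{Z}}}\to\mathbb{X}$ is almost automorphic if for every sequence of integers $(s_n')\subset\mathbb{Z}$ there exists a subsequence $(s_n)$ such that $g(t):=\lim_{n\to\infty}f(tq^{s_n})$ exists for each $t\in\overline{q^{\mathbb{Z}}}$ and $\lim_{n\to\infty}g(tq^{-s_n})=f(t)$ for each $t\in\overline{q^{\mathbb{Z}}}$. *)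

From HB Require Import structures.
From mathcomp Require Import all_boot all_order all_algebra.
From mathcomp Require Import all_classical all_reals all_analysis.
Set Implicit Arguments. Unset Strict Implicit. Unset Printing Implicit Defensive.
Import Order.TTheory GRing.Theory Num.Theory.
Import numFieldNormedType.Exports.
Local Open Scope classical_set_scope.
Local Open Scope ring_scope.

Definition qZbar (R : realType) (q : R) : set R :=
  [set t | t = 0 \/ exists n : int, t = q ^ n].

(* Almost automorphic functions on qZbar q (paper's definition).
   f is given on all of R; only its values on qZbar q matter. *)
Definition almost_automorphic (R : realType) (X : normedModType R)
  (q : R) (f : R -> X) : Prop :=
  {within qZbar q, continuous f} /\
  forall s' : nat -> int,
    exists phi : nat -> nat,
      {homo phi : m n / (m < n)%N >-> (m < n)%N} /\
      exists g : R -> X,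
        (forall t, qZbar q t ->
           (fun n => f (t * q ^ (s' (phi n)))) @ \oo --> g t) /\
        (forall t, qZbar q t ->
           (fun n => g (t * q ^ (- s' (phi n)))) @ \oo --> f t).

(* The translates f(t q^n) along s'_n = n converge, along a subsequence, to some g, and f is
   recovered from g by the reverse translates.  Since f vanishes on q^n for large n, every
   g(q^m) is a limit of zeros, hence so is every f(q^m) = lim g(q^(m - s_n)); finally
   f(0) = lim f(q^-k) = 0 by continuity at 0, which lies in the closure of the powers. *)
From HB Require Import structures.
From mathcomp Require Import all_boot all_order all_algebra.
From mathcomp Require Import all_classical all_reals all_analysis.
From mathcomp Require Import zify.
Import Order.TTheory GRing.Theory Num.Theory.
Import numFieldNormedType.Exports.
Local Open Scope classical_set_scope.
Local Open Scope ring_scope.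

Lemma cvg_near_cst_eq {T : Type} {F : set_system T} {FF : ProperFilter F}
    {U : topologicalType} (hU : hausdorff_space U) {u : T -> U} {a l : U} :
  u @ F --> l -> (\forall x \near F, u x = a) -> l = a.
Proof. by move=> ul ua; apply: (cvg_unique hU ul); apply: cvg_near_cst. Qed.

Lemma cvg_within_nbhs {T : topologicalType} {A : set T} {a : T} {u : nat -> T} :
  (forall n, A (u n)) -> u @ \oo --> a -> u @ \oo --> within A (nbhs a).
Proof.
move=> Au ua P AP; have : \forall n \near \oo, A (u n) -> P (u n) := ua _ AP.
by apply: filterS => n /(_ (Au n)).
Qed.

Lemma within_continuous_cvg {T U : topologicalType} {A : set T} {f : T -> U}
    {a : T} {u : nat -> T} :
  {within A, continuous f} -> A a -> (forall n, A (u n)) ->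
  u @ \oo --> a -> f \o u @ \oo --> f a.
Proof.
move=> fA Aa Au ua.
have fa : f @ within A (nbhs a) --> f a := (subspace_continuousP _ _).1 fA a Aa.
exact: cvg_trans (cvg_app f (cvg_within_nbhs Au ua)) fa.
Qed.

Section QuantumSet.
Context {R : realType} {q : R}.

Lemma qZbar0 : qZbar q 0.
Proof. by left. Qed.

Lemma qZbar_expz (m : int) : qZbar q (q ^ m).
Proof. by right; exists m. Qed.

Lemma almost_automorphic_expz_eq0 {X : normedModType R} {f : R -> X} :
  q != 0 -> almost_automorphic q f ->
  (exists n0 : int, forall n : int, n0 < n -> f (q ^ n) = 0) ->
  forall m : int, f (q ^ m) = 0.
Proof.
move=> q0 [_ aa] [n0 fn0] m.
have [phi [phi_incr [g [fg gf]]]] := aa (fun n => n%:Z).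
have phi_ge (n : nat) : (n <= phi n)%N := unstable.mono_leq_infl (leq_mono phi_incr) n.
have g0 (k : int) : g (q ^ k) = 0.
  apply: (cvg_near_cst_eq (@norm_hausdorff _ _) (fg _ (qZbar_expz k))).
  exists `|n0 - k|%N.+1 => // n /= kn.
  rewrite -expfzDr //; apply: fn0.
  have := phi_ge n; lia.
apply: (cvg_near_cst_eq (@norm_hausdorff _ _) (gf _ (qZbar_expz m))).
by apply: nearW => n; rewrite -expfzDr.
Qed.

Hypothesis q_gt1 : 1 < q.

Lemma expzN_cvg0 : (fun k : nat => q ^ (- k%:Z)) @ \oo --> 0.
Proof.
have q_gt0 : 0 < q := lt_trans ltr01 q_gt1.
have -> : (fun k : nat => q ^ (- k%:Z)) = GRing.exp q^-1.
  by apply/funext => k; rewrite -invr_expz expfV.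
apply: cvg_expr.
by rewrite ger0_norm ?invr_ge0 ?ltW // invf_lt1.
Qed.

Lemma within_continuous_qZbar_eq0 {X : normedModType R} {f : R -> X} :
  {within qZbar q, continuous f} -> (forall m : int, f (q ^ m) = 0) ->
  forall t, qZbar q t -> f t = 0.
Proof.
move=> fc f0 t [->|[m ->]]; last exact: f0.
have f_cvg := within_continuous_cvg fc qZbar0 (fun k => qZbar_expz _) expzN_cvg0.
apply: (cvg_near_cst_eq (@norm_hausdorff _ _) f_cvg).
by apply: nearW => k; apply: f0.
Qed.

End QuantumSet.

Theorem theorem3p4 (R : realType) (X : completeNormedModType R) (q : R)
  (f : R -> X) :
  1 < q ->
  almost_automorphic q f ->
  (exists n0 : int, forall n : int, n0 < n -> f (q ^ n) = 0) ->
  forall t, qZbar q t -> f t = 0.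
Proof.
move=> q_gt1 aaf f_eventually0.
have q0 : q != 0 by rewrite gt_eqF // (lt_trans ltr01 q_gt1).
have [fc _] := aaf.
have fpow := almost_automorphic_expz_eq0 q0 aaf f_eventually0.
exact: (within_continuous_qZbar_eq0 q_gt1 fc fpow).
Qed.
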